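(* Let $\mathbf{A}\in\mathbb{C}^{M\times N_a}$, $\mathbf{B}\in\mathbb{C}^{M\times N_b}$ have unit-$\ell_2$-norm columns with coherence parameters $\mu_a,\mu_b,\mu_m$. Let $\mathcal{X}\subseteq\{1,\dots,N_a\}$, $|\mathcal{X}|=n_x$, and $\mathcal{E}\subseteq\{1,\dots,N_b\}$, $|\mathcal{E}|=n_e$, and assume $$(1-\mu_a(n_x-1))\,[1-\mu_b(n_e-1)]^+>n_xn_e\mu_m^2 .$$ Then $1-\mu_b(n_e-1)>0$, $\mathbf{B}_{\mathcal{E}}^H\mathbf{B}_{\mathcal{E}}$ is invertible, and with $\mathbf{R}_{\mathcal{E}}=\mathbf{I}_M-\mathbf{B}_{\mathcal{E}}\mathbf{B}_{\mathcal{E}}^\dagger$ the matrix $\mathbf{A}_{\mathcal{X}}^H\mathbf{R}_{\mathcal{E}}\mathbf{A}_{\mathcal{X}}$ is invertible with $$\big\|(\mathbf{A}_{\mathcal{X}}^H\mathbf{R}_{\mathcal{E}}\mathbf{A}_{\mathcal{X}})^{-1}\big\|_2\le\frac{1}{1-\mu_a(n_x-1)-\dfrac{n_xn_e\mu_m^2}{1-\mu_b(n_e-1)}}.$$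
   Context: Coherence parameters: $\mu_a=\max_{k\ne\ell}|\mathbf{a}_k^H\mathbf{a}_\ell|$, $\mu_b=\max_{k\ne\ell}|\mathbf{b}_k^H\mathbf{b}_\ell|$, $\mu_m=\max_{k,\ell}|\mathbf{a}_k^H\mathbf{b}_\ell|$. $[x]^+=\max\{x,0\}$. $\mathbf{M}_{\mathcal{S}}$ is the column submatrix indexed by $\mathcal{S}$; $\mathbf{M}^\dagger=(\mathbf{M}^H\mathbf{M})^{-1}\mathbf{M}^H$; $\|\cdot\|_2$ of a matrix is the spectral norm. *)

(* Complex scalars: an arbitrary numClosedFieldType R
   (algebraically closed field with conjugation and norm, e.g. algC). *)
From HB Require Import structures.
From mathcomp Require Import all_boot all_order all_algebra.
Set Implicit Arguments. Unset Strict Implicit. Unset Printing Implicit Defensive.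
Import Order.TTheory GRing.Theory Num.Theory.
Local Open Scope ring_scope.

Definition ctmx (R : numClosedFieldType) m n (A : 'M[R]_(m, n)) : 'M[R]_(n, m) :=
  (map_mx Num.conj A)^T.

Definition cdot (R : numClosedFieldType) m (a b : 'cV[R]_m) : R :=
  \sum_(i < m) (a i 0)^* * b i 0.

Definition vnorm2 (R : numClosedFieldType) m (v : 'cV[R]_m) : R :=
  sqrtC (\sum_(i < m) `|v i 0| ^+ 2).

Definition unit_cols (R : numClosedFieldType) m n (A : 'M[R]_(m, n)) : Prop :=
  forall j : 'I_n, vnorm2 (col j A) = 1.

(* Coherence parameters (max over the empty index set is 0). *)
Definition mutual_coh (R : numClosedFieldType) m n (A : 'M[R]_(m, n)) : R :=
  \big[Order.max/0]_(k < n) \big[Order.max/0]_(l < n | k != l)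
     `|cdot (col k A) (col l A)|.

Definition cross_coh (R : numClosedFieldType) m na nb
  (A : 'M[R]_(m, na)) (B : 'M[R]_(m, nb)) : R :=
  \big[Order.max/0]_(k < na) \big[Order.max/0]_(l < nb)
     `|cdot (col k A) (col l B)|.

(* Column submatrix M_S indexed by S (columns in increasing index order). *)
Definition colsubset (R : Type) m n (A : 'M[R]_(m, n)) (S : {set 'I_n})
  : 'M[R]_(m, #|S|) :=
  colsub (fun i : 'I_#|S| => enum_val i) A.

(* Spectral-norm bound ||A||_2 <= c, i.e. sup_{v<>0} ||Av||/||v|| <= c,
   written out: ||A v||_2 <= c ||v||_2 for all v. *)
Definition specnorm_le (R : numClosedFieldType) m n (A : 'M[R]_(m, n)) (c : R)
  : Prop :=
  forall v : 'cV[R]_n, vnorm2 (A *m v) <= c * vnorm2 v.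

From HB Require Import structures.
From mathcomp Require Import all_boot all_order all_algebra.
From mathcomp Require Import ring.
Import Order.TTheory GRing.Theory Num.Theory.
Local Open Scope ring_scope.
Set Implicit Arguments. Unset Strict Implicit. Unset Printing Implicit Defensive.

(* Everything is reduced to quadratic forms v^H K v and squared Euclidean norms
   ||v||^2 = sum |v_i|^2 (sqnorm).  The ingredients are:
   - Cauchy-Schwarz for the inner product a^H b (via Lagrange's identity);
   - a Gershgorin-type bound: a matrix with unit columns and coherence mu has
     ||K v||^2 >= (1 - mu (n - 1)) ||v||^2, and a p x n matrix with entries
     bounded by mu has ||K v||^2 <= p n mu^2 ||v||^2;
   - coercivity: v^H K v >= c ||v||^2 with c > 0 makes K invertible with
     ||K^-1||_2 <= 1 / c;
   - the Schur complement form v^H G v = ||A v||^2 - ||B z||^2, where z are the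
     least-squares coefficients of A v on B, and ||B z||^2 <= ||B^H A v||^2 / d
     when ||B z||^2 >= d ||z||^2.
   The theorem combines these with the coherence bounds on the column
   submatrices A_X and B_E. *)

Lemma bigmax_ge_idx {disp : Order.disp_t} {T : porderType disp}
  (I : finType) (P : pred I) (F : I -> T) (x0 : T) :
  (forall i, P i -> x0 <= F i)%O -> (x0 <= \big[Order.max/x0]_(i | P i) F i)%O.
Proof.
by move=> F_ge; elim/big_ind: _ => // x y x0_le_x x0_le_y; rewrite maxEle; case: ifP.
Qed.

(* In a partial order Order.max need not be an upper bound, but among real
   numbers it is: each (real) term is below the iterated max. *)
Lemma le_bigmax_real (R : numDomainType) (I : finType) (P : pred I)
  (F : I -> R) (x0 : R) j :
  x0 \is Num.real -> (forall i, P i -> F i \is Num.real) -> P j ->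
  F j <= \big[Order.max/x0]_(i | P i) F i.
Proof.
move=> x0r Fr Pj.
suff: forall s, j \in s -> F j <= \big[Order.max/x0]_(i <- s | P i) F i.
  by apply; rewrite mem_index_enum.
elim=> [|a s IH] //; rewrite inE big_cons => js.
have mr : \big[Order.max/x0]_(i <- s | P i) F i \is Num.real.
  by apply: bigmax_real => // i; exact: Fr.
case: (boolP (P a)) => [Pa|nPa]; last first.
  by case/orP: js => [/eqP ja | /IH //]; rewrite -ja Pj in nPa.
rewrite maxEle; have [Fam|mFa] := real_leP (Fr a Pa) mr.
  by case/orP: js => [/eqP-> // | /IH].
case/orP: js => [/eqP-> // | /IH Fjm].
exact: le_trans Fjm (ltW mFa).
Qed.

Section Hermitian.
Variable R : numClosedFieldType.

Definition sqnorm m (v : 'cV[R]_m) : R := \sum_(i < m) `|v i 0| ^+ 2.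

Lemma sqnorm_ge0 m (v : 'cV[R]_m) : 0 <= sqnorm v.
Proof. by apply: sumr_ge0 => i _; rewrite exprn_ge0. Qed.

Lemma vnorm2_ge0 m (v : 'cV[R]_m) : 0 <= vnorm2 v.
Proof. by rewrite sqrtC_ge0 sqnorm_ge0. Qed.

Lemma vnorm2_sqr m (v : 'cV[R]_m) : vnorm2 v ^+ 2 = sqnorm v.
Proof. exact: sqrtCK. Qed.

Lemma vnorm2_eq0 m (v : 'cV[R]_m) : vnorm2 v = 0 -> v = 0.
Proof.
rewrite /vnorm2 => /eqP; rewrite sqrtC_eq0 => /eqP v0.
apply/matrixP => i j; rewrite (ord1 j) mxE.
have sq_ge0 k (_ : true) : 0 <= `|v k 0| ^+ 2 by rewrite exprn_ge0.
have /eqP := psumr_eq0P sq_ge0 v0 (i:=i) isT.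
by rewrite expf_eq0 /= normr_eq0 => /eqP.
Qed.

Lemma ctmxE m n (A : 'M[R]_(m, n)) i j : ctmx A i j = (A j i)^*.
Proof. by rewrite !mxE. Qed.

Lemma ctmx_mul m n p (A : 'M[R]_(m, n)) (B : 'M[R]_(n, p)) :
  ctmx (A *m B) = ctmx B *m ctmx A.
Proof.
apply/matrixP => i j; rewrite ctmxE !mxE rmorph_sum; apply: eq_bigr => k _.
by rewrite !ctmxE rmorphM mulrC.
Qed.

Lemma ctmxK m n (A : 'M[R]_(m, n)) : ctmx (ctmx A) = A.
Proof. by apply/matrixP => i j; rewrite !ctmxE conjCK. Qed.

Lemma cdotE m (a b : 'cV[R]_m) : cdot a b = (ctmx a *m b) 0 0.
Proof. by rewrite mxE; apply: eq_bigr => i _; rewrite ctmxE. Qed.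

Lemma cdotC m (a b : 'cV[R]_m) : cdot a b = (cdot b a)^*.
Proof.
rewrite /cdot rmorph_sum; apply: eq_bigr => i _.
by rewrite rmorphM /= conjCK mulrC.
Qed.

Lemma cdot_self m (v : 'cV[R]_m) : cdot v v = sqnorm v.
Proof. by apply: eq_bigr => i _; rewrite normCKC. Qed.

Lemma gram_form m n (K : 'M[R]_(m, n)) (v : 'cV[R]_n) :
  (ctmx v *m (ctmx K *m K *m v)) 0 0 = sqnorm (K *m v).
Proof. by rewrite -cdot_self cdotE ctmx_mul !mulmxA. Qed.

(* Cauchy-Schwarz for real families, from Lagrange's identity
   2 ((sum x^2)(sum y^2) - (sum xy)^2) = sum_(i,j) (x_i y_j - x_j y_i)^2. *)
Lemma real_CauchySchwarz n (x y : 'I_n -> R) :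
  (forall i, x i \is Num.real) -> (forall i, y i \is Num.real) ->
  (\sum_i x i * y i) ^+ 2 <= (\sum_i x i ^+ 2) * (\sum_i y i ^+ 2).
Proof.
move=> xr yr.
set D := \sum_i \sum_j (x i * y j - x j * y i) ^+ 2.
have D_ge0 : 0 <= D.
  apply: sumr_ge0 => i _; apply: sumr_ge0 => j _.
  by rewrite -realEsqr rpredB // rpredM.
have Lagrange :
    D = 2 * ((\sum_i x i ^+ 2) * (\sum_i y i ^+ 2) - (\sum_i x i * y i) ^+ 2).
  have -> : D = \sum_i \sum_j (x i ^+ 2 * y j ^+ 2)
              + \sum_i \sum_j (y i ^+ 2 * x j ^+ 2)
              - 2 * \sum_i \sum_j (x i * y i) * (x j * y j).
    rewrite mulr_sumr -big_split -sumrB /=; apply: eq_bigr => i _.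
    by rewrite mulr_sumr -big_split -sumrB /=; apply: eq_bigr => j _; ring.
  by rewrite -!big_distrlr /=; ring.
by rewrite -subr_ge0 -(pmulr_rge0 _ (ltr0Sn _ 1)) -Lagrange.
Qed.

Lemma sum_norm_sqr_le n (v : 'cV[R]_n) :
  (\sum_i `|v i 0|) ^+ 2 <= n%:R * sqnorm v.
Proof.
have := real_CauchySchwarz (fun i => normr_real (v i 0)) (fun _ => real1 R).
rewrite (eq_bigr (fun i => `|v i 0|)) => [|i _]; last by rewrite mulr1.
by rewrite sumr_const card_ord expr1n mulrC.
Qed.

Lemma cdot_CauchySchwarz m (a b : 'cV[R]_m) :
  `|cdot a b| <= vnorm2 a * vnorm2 b.
Proof.
apply: le_trans (ler_norm_sum _ _ _) _.
rewrite (eq_bigr (fun i => `|a i 0| * `|b i 0|)) => [|i _]; last first.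
  by rewrite normrM norm_conjC.
rewrite -ler_sqr ?nnegrE ?mulr_ge0 ?vnorm2_ge0 ?sumr_ge0 // => [|i _].
  rewrite exprMn !vnorm2_sqr.
  by apply: real_CauchySchwarz => i; apply: normr_real.
by rewrite mulr_ge0.
Qed.

End Hermitian.

Section Coherence.
Variables (R : numClosedFieldType) (m : nat).

Lemma mutual_coh_ge0 n (A : 'M[R]_(m, n)) : 0 <= mutual_coh A.
Proof.
by apply: bigmax_ge_idx => k _; apply: bigmax_ge_idx => l _; apply: normr_ge0.
Qed.

Lemma cross_coh_ge0 na nb (A : 'M[R]_(m, na)) (B : 'M[R]_(m, nb)) :
  0 <= cross_coh A B.
Proof.
by apply: bigmax_ge_idx => k _; apply: bigmax_ge_idx => l _; apply: normr_ge0.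
Qed.

Lemma le_bigmax2_nonneg n1 n2 (P : 'I_n1 -> pred 'I_n2)
  (F : 'I_n1 -> 'I_n2 -> R) k l :
  (forall k l, 0 <= F k l) -> P k l ->
  F k l <= \big[Order.max/0]_(k0 < n1)
             \big[Order.max/0]_(l0 < n2 | P k0 l0) F k0 l0.
Proof.
move=> F_ge0 Pkl.
apply: (@le_trans _ _ (\big[Order.max/0]_(l0 < n2 | P k l0) F k l0)).
  by apply: le_bigmax_real => // l0 _; apply: ger0_real.
apply: le_bigmax_real => // k0 _.
by apply/ger0_real/bigmax_ge_idx.
Qed.

Lemma col_colsubset T n (A : 'M[T]_(m, n)) (S : {set 'I_n}) i :
  col i (colsubset A S) = col (enum_val i) A.
Proof. exact: col_colsub. Qed.

Lemma unit_cols_colsubset n (A : 'M[R]_(m, n)) (S : {set 'I_n}) :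
  unit_cols A -> forall j, sqnorm (col j (colsubset A S)) = 1.
Proof. by move=> Aunit j; rewrite col_colsubset -vnorm2_sqr Aunit expr1n. Qed.

Lemma mutual_coh_colsubset n (A : 'M[R]_(m, n)) (S : {set 'I_n}) i j :
  i != j ->
  `|cdot (col i (colsubset A S)) (col j (colsubset A S))| <= mutual_coh A.
Proof.
move=> ij; rewrite !col_colsubset.
apply: (le_bigmax2_nonneg (P := fun k l => k != l)) => [k l|].
  exact: normr_ge0.
by apply: contra ij => /eqP /enum_val_inj ->.
Qed.

(* The entries of B_E^H A_X are inner products of columns of B and A. *)
Lemma cross_coh_colsubset na nb (A : 'M[R]_(m, na)) (B : 'M[R]_(m, nb))
  (X : {set 'I_na}) (E : {set 'I_nb}) j i :
  `|(ctmx (colsubset B E) *m colsubset A X) j i| <= cross_coh A B.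
Proof.
have -> : (ctmx (colsubset B E) *m colsubset A X) j i =
          (cdot (col (enum_val i) A) (col (enum_val j) B))^*.
  by rewrite -cdotC /cdot mxE; apply: eq_bigr => l _; rewrite ctmxE !mxE.
rewrite norm_conjC.
by apply: (le_bigmax2_nonneg (P := fun _ _ => true)).
Qed.

End Coherence.

Section GramBounds.
Variable R : numClosedFieldType.

Lemma quad_form_expand n (G : 'M[R]_n) (v : 'cV[R]_n) :
  (ctmx v *m (G *m v)) 0 0 = \sum_i \sum_k (v k 0)^* * G k i * v i 0.
Proof.
rewrite mulmxA mxE; apply: eq_bigr => i _.
by rewrite mxE big_distrl; apply: eq_bigr => k _; rewrite ctmxE.
Qed.

Lemma gram_entry m n (K : 'M[R]_(m, n)) k i :
  (ctmx K *m K) k i = cdot (col k K) (col i K).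
Proof. by rewrite mxE; apply: eq_bigr => l _; rewrite ctmxE !mxE. Qed.

Lemma offdiag_form_bound n (G : 'M[R]_n) (mu : R) (v : 'cV[R]_n) :
  0 <= mu -> (forall k i, k != i -> `|G k i| <= mu) ->
  `|\sum_i \sum_(k | k != i) (v k 0)^* * G k i * v i 0|
    <= mu * (n%:R - 1) * sqnorm v.
Proof.
move=> mu_ge0 G_le; pose S := \sum_i `|v i 0|.
apply: (@le_trans _ _ (\sum_i \sum_(k | k != i) `|v k 0| * mu * `|v i 0|)).
  apply: le_trans (ler_norm_sum _ _ _) _; apply: ler_sum => i _.
  apply: le_trans (ler_norm_sum _ _ _) _; apply: ler_sum => k ki.
  rewrite !normrM norm_conjC ler_wpM2r // ler_wpM2l //; exact: G_le.
have row_sum i : \sum_(k | k != i) `|v k 0| * mu * `|v i 0|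
                 = mu * (S * `|v i 0| - `|v i 0| ^+ 2).
  rewrite -!big_distrl /= [S](bigD1 i) //=; ring.
rewrite (eq_bigr _ (fun i _ => row_sum i)) -mulr_sumr sumrB -mulr_sumr -expr2.
rewrite -mulrA ler_wpM2l // mulrBl mul1r lerB //; exact: sum_norm_sqr_le.
Qed.

Lemma gram_lower_bound m n (K : 'M[R]_(m, n)) (mu : R) (v : 'cV[R]_n) :
  (forall j, sqnorm (col j K) = 1) -> 0 <= mu ->
  (forall i j, i != j -> `|cdot (col i K) (col j K)| <= mu) ->
  (1 - mu * (n%:R - 1)) * sqnorm v <= sqnorm (K *m v).
Proof.
move=> Kunit mu_ge0 Kcoh.
set T := \sum_i \sum_(k | k != i) (v k 0)^* * (ctmx K *m K) k i * v i 0.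
have split_diag : sqnorm (K *m v) = sqnorm v + T.
  rewrite -gram_form quad_form_expand /T -big_split /=; apply: eq_bigr => i _.
  by rewrite (bigD1 i) //= gram_entry cdot_self Kunit mulr1 normCKC.
have T_real : T \is Num.real.
  have -> : T = sqnorm (K *m v) - sqnorm v by rewrite split_diag addrC addKr.
  by rewrite rpredB // ger0_real // sqnorm_ge0.
have T_bound : `|T| <= mu * (n%:R - 1) * sqnorm v.
  by apply: offdiag_form_bound => // k i ki; rewrite gram_entry Kcoh.
rewrite split_diag mulrBl mul1r lerD2l; exact: real_lerNnormlW T_bound.
Qed.

Lemma entry_bound_upper p n (K : 'M[R]_(p, n)) (mu : R) (v : 'cV[R]_n) :
  0 <= mu -> (forall j i, `|K j i| <= mu) ->
  sqnorm (K *m v) <= p%:R * n%:R * mu ^+ 2 * sqnorm v.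
Proof.
move=> mu_ge0 K_le; pose S := \sum_i `|v i 0|.
have row_bound j : `|(K *m v) j 0| ^+ 2 <= mu ^+ 2 * (n%:R * sqnorm v).
  have row_abs : `|(K *m v) j 0| <= mu * S.
    rewrite mxE /S mulr_sumr; apply: le_trans (ler_norm_sum _ _ _) _.
    by apply: ler_sum => i _; rewrite normrM ler_wpM2r.
  apply: le_trans (_ : (mu * S) ^+ 2 <= _).
    by rewrite lerXn2r ?nnegrE ?mulr_ge0 ?sumr_ge0.
  by rewrite exprMn ler_wpM2l ?exprn_ge0 ?sum_norm_sqr_le.
apply: le_trans (ler_sum _ (fun j _ => row_bound j)) _.
rewrite sumr_const card_ord -mulr_natl le_eqVlt; apply/predU1l; ring.
Qed.

End GramBounds.

Section Coercivity.
Variable R : numClosedFieldType.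

(* A quadratic-form lower bound v^H K v >= c ||v||^2 yields ||K v|| >= c ||v||,
   by Cauchy-Schwarz applied to v^H (K v). *)
Lemma form_coercive_norm n (K : 'M[R]_n) (c : R) : 0 < c ->
  (forall v, c * sqnorm v <= (ctmx v *m (K *m v)) 0 0) ->
  forall v, c * vnorm2 v <= vnorm2 (K *m v).
Proof.
move=> c_gt0 K_form v; have := K_form v; rewrite -cdotE => form_v.
have form_ge0 : 0 <= cdot v (K *m v).
  by apply: le_trans form_v; rewrite mulr_ge0 ?sqnorm_ge0 ?ltW.
have sq_bound : c * vnorm2 v ^+ 2 <= vnorm2 v * vnorm2 (K *m v).
  rewrite vnorm2_sqr; apply: le_trans form_v _.
  by rewrite -(ger0_norm form_ge0) cdot_CauchySchwarz.
have [v0|vn0] := eqVneq (vnorm2 v) 0; first by rewrite v0 mulr0 vnorm2_ge0.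
have v_gt0 : 0 < vnorm2 v by rewrite lt0r vn0 vnorm2_ge0.
by rewrite -(ler_pM2l v_gt0) mulrCA -expr2.
Qed.

Lemma norm_coercive_inverse n (K : 'M[R]_n) (c : R) : 0 < c ->
  (forall v, c * vnorm2 v <= vnorm2 (K *m v)) ->
  K \in unitmx /\ specnorm_le (invmx K) (1 / c).
Proof.
move=> c_gt0 K_lower.
have K_inj (v : 'cV[R]_n) : K *m v = 0 -> v = 0.
  have norm0 : vnorm2 (0 : 'cV[R]_n) = 0.
    by rewrite /vnorm2 big1 ?sqrtC0 // => i _; rewrite mxE normr0 expr0n.
  move=> Kv0; apply: vnorm2_eq0; apply/eqP; rewrite eq_le vnorm2_ge0 andbT.
  by rewrite -(pmulr_rle0 _ c_gt0) -norm0 -Kv0 K_lower.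
have K_unit : K \in unitmx.
  rewrite -unitmx_tr -row_free_unit; apply: inj_row_free => u uK0.
  apply: trmx_inj; rewrite trmx0; apply: K_inj.
  by rewrite -[K]trmxK -trmx_mul uK0 trmx0.
split=> // u; have := K_lower (invmx K *m u); rewrite mulmxA mulmxV // mul1mx.
by move=> Ku; rewrite mul1r -(ler_pM2l c_gt0) mulrA divff ?gt_eqF // mul1r.
Qed.

Lemma form_coercive_inverse n (K : 'M[R]_n) (c : R) : 0 < c ->
  (forall v, c * sqnorm v <= (ctmx v *m (K *m v)) 0 0) ->
  K \in unitmx /\ specnorm_le (invmx K) (1 / c).
Proof.
by move=> c_gt0 /(form_coercive_norm c_gt0); apply: norm_coercive_inverse.
Qed.

End Coercivity.

(* Its form is
   v^H G v = ||A v||^2 - ||B z||^2 with z the least-squares coefficients of A v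
   on the columns of B; both terms are controlled by the coherence bounds. *)
Section SchurComplement.
Variables (R : numClosedFieldType) (m p q : nat).
Variables (A : 'M[R]_(m, p)) (B : 'M[R]_(m, q)).
Hypothesis BB_unit : ctmx B *m B \in unitmx.

Let lsq (y : 'cV[R]_q) : 'cV[R]_q := invmx (ctmx B *m B) *m y.

Lemma lsq_energy (y : 'cV[R]_q) : sqnorm (B *m lsq y) = cdot (lsq y) y.
Proof.
by rewrite -gram_form cdotE /lsq (mulmxA (ctmx B *m B)) mulmxV // mul1mx.
Qed.

Lemma schur_form (v : 'cV[R]_p) :
  let RE := 1%:M - B *m (invmx (ctmx B *m B) *m ctmx B) in
  (ctmx v *m (ctmx A *m RE *m A *m v)) 0 0
    = sqnorm (A *m v) - sqnorm (B *m lsq (ctmx B *m (A *m v))).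
Proof.
move=> RE; set w := A *m v; set z := lsq (ctmx B *m w).
have -> : ctmx v *m (ctmx A *m RE *m A *m v) = ctmx w *m (RE *m w).
  by rewrite /w ctmx_mul !mulmxA.
have -> : RE *m w = w - B *m z by rewrite /RE mulmxBl mul1mx /z /lsq !mulmxA.
have normal_eq : ctmx B *m B *m z = ctmx B *m w.
  by rewrite /z /lsq mulmxA mulmxV // mul1mx.
have cross : ctmx w *m (B *m z) = ctmx (B *m z) *m (B *m z).
  rewrite mulmxA (_ : ctmx w *m B = ctmx (ctmx B *m w)); last first.
    by rewrite ctmx_mul ctmxK.
  by rewrite -normal_eq !ctmx_mul ctmxK !mulmxA.
have entryB (U V : 'M[R]_1) : (U - V) 0 0 = U 0 0 - V 0 0 by rewrite !mxE.
by rewrite mulmxBr cross entryB -!cdotE !cdot_self.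
Qed.

Lemma lsq_energy_le (d : R) (y : 'cV[R]_q) : 0 < d ->
  (forall z, d * sqnorm z <= sqnorm (B *m z)) ->
  sqnorm (B *m lsq y) <= sqnorm y / d.
Proof.
move=> d_gt0 B_lower; set N := sqnorm (B *m lsq y).
set a := vnorm2 (lsq y); set b := vnorm2 y.
have a_ge0 : 0 <= a := vnorm2_ge0 _.
have b_ge0 : 0 <= b := vnorm2_ge0 _.
have N_lower : d * a ^+ 2 <= N by rewrite vnorm2_sqr B_lower.
have N_upper : N <= a * b.
  rewrite /N lsq_energy; apply: le_trans (cdot_CauchySchwarz _ _).
  by apply: real_ler_norm; rewrite -lsq_energy ger0_real // sqnorm_ge0.
rewrite -vnorm2_sqr -/b; apply: (le_trans N_upper).
have [a0|a_neq0] := eqVneq a 0.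
  by rewrite a0 mul0r divr_ge0 // ?exprn_ge0 // ltW.
have a_gt0 : 0 < a by rewrite lt0r a_neq0.
have da_le_b : d * a <= b.
  by rewrite -(ler_pM2l a_gt0) mulrCA -expr2; apply: le_trans N_lower N_upper.
have a_le : a <= b / d by rewrite ler_pdivlMr // mulrC.
by rewrite expr2 mulrAC ler_wpM2r.
Qed.

Lemma schur_form_lower (P d k : R) (v : 'cV[R]_p) : 0 < d ->
  (forall v, P * sqnorm v <= sqnorm (A *m v)) ->
  (forall z, d * sqnorm z <= sqnorm (B *m z)) ->
  (forall v, sqnorm (ctmx B *m A *m v) <= k * sqnorm v) ->
  (P - k / d) * sqnorm v <=
    (ctmx v *m (ctmx A *m (1%:M - B *m (invmx (ctmx B *m B) *m ctmx B))
                *m A *m v)) 0 0.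
Proof.
move=> d_gt0 A_lower B_lower BA_upper; rewrite schur_form mulrBl lerB //.
apply: le_trans (lsq_energy_le _ d_gt0 B_lower) _.
rewrite mulrAC; apply: ler_wpM2r; first by rewrite invr_ge0 ltW.
by rewrite mulmxA BA_upper.
Qed.

End SchurComplement.

Lemma lt_mul_max0 (R : numDomainType) (P d k : R) :
  d \is Num.real -> 0 <= k -> k < P * Num.max 0 d -> 0 < d /\ k < P * d.
Proof.
move=> d_real k_ge0; have [d_le0|d_gt0] := real_leP d_real (real0 R) => //.
by rewrite mulr0 => /(le_lt_trans k_ge0); rewrite ltxx.
Qed.

Theorem mainTheorem8 (R : numClosedFieldType) (M Na Nb : nat)
  (A : 'M[R]_(M, Na)) (B : 'M[R]_(M, Nb))
  (X : {set 'I_Na}) (E : {set 'I_Nb}) :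
  unit_cols A -> unit_cols B ->
  let mua := mutual_coh A in
  let mub := mutual_coh B in
  let mum := cross_coh A B in
  let nx : R := (#|X|)%:R in
  let ne : R := (#|E|)%:R in
  (1 - mua * (nx - 1)) * Num.max 0 (1 - mub * (ne - 1)) > nx * ne * mum ^+ 2 ->
  let AX := colsubset A X in
  let BE := colsubset B E in
  [/\ 0 < 1 - mub * (ne - 1),
      ctmx BE *m BE \in unitmx &
      let RE := 1%:M - BE *m (invmx (ctmx BE *m BE) *m ctmx BE) in
      let G := ctmx AX *m RE *m AX in
      G \in unitmx /\
      specnorm_le (invmx G)
        (1 / (1 - mua * (nx - 1) - nx * ne * mum ^+ 2 / (1 - mub * (ne - 1))))].
Proof.
move=> A_unit B_unit mua mub mum nx ne hyp AX BE.
have mua_ge0 : 0 <= mua := mutual_coh_ge0 A.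
have mub_ge0 : 0 <= mub := mutual_coh_ge0 B.
have mum_ge0 : 0 <= mum := cross_coh_ge0 A B.
have k_ge0 : 0 <= nx * ne * mum ^+ 2 by rewrite !mulr_ge0 ?exprn_ge0.
have d_real : 1 - mub * (ne - 1) \is Num.real.
  by rewrite rpredB ?rpredM ?rpredB ?ger0_real ?ler0n.
have [d_gt0 {}hyp] := lt_mul_max0 d_real k_ge0 hyp.
have AX_lower v : (1 - mua * (nx - 1)) * sqnorm v <= sqnorm (AX *m v).
  by apply: gram_lower_bound => // [j|i j];
    [apply: unit_cols_colsubset | apply: mutual_coh_colsubset].
have BE_lower z : (1 - mub * (ne - 1)) * sqnorm z <= sqnorm (BE *m z).
  by apply: gram_lower_bound => // [j|i j];
    [apply: unit_cols_colsubset | apply: mutual_coh_colsubset].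
have BEAX_upper v :
    sqnorm (ctmx BE *m AX *m v) <= nx * ne * mum ^+ 2 * sqnorm v.
  rewrite [nx * ne]mulrC; apply: entry_bound_upper => // j i.
  exact: cross_coh_colsubset.
have BB_form z :
    (1 - mub * (ne - 1)) * sqnorm z <= (ctmx z *m (ctmx BE *m BE *m z)) 0 0.
  by rewrite gram_form.
have [BB_unit _] := form_coercive_inverse d_gt0 BB_form.
split=> // RE G; apply: form_coercive_inverse => [|v].
  by rewrite subr_gt0 ltr_pdivrMr.
exact: schur_form_lower.
Qed.
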